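(* In the setting described in the context, if $g_m$ is a $\Phi$-linear combination of elements of the form $w\,g(i,\varepsilon,\sigma)$, where $q_i\varepsilon\sigma\to q_jT_\alpha T_\beta$ is a command of $M$ and $w\in W_{\varepsilon\sigma}$, then $m\in S$.
   Context: $\Phi$ is a commutative ring with unity $1\ne0$, regarded as a differential ring with the commuting derivations $\delta_1,\delta_2$ acting as zero. $S\subseteq\mathbb{N}$ is recursively enumerable and $M$ is a two-tape acyclic Minsky machine with states $q_0,\ldots,q_n$ ($q_0$ terminal) such that for every $x\in\mathbb{N}$, starting at configuration $[1,2^{2^x},0]$, $M$ reaches $[0,1,0]$ in finitely many steps if $x\in S$ and operates infinitely if $x\notin S$. Minsky machine conventions: two tapes infinite to the right with cells $0,1,2,\ldots$; cell $0$ contains $1$, all others $0$; a configuration $[i,a,b]$ means state $q_i$, head at cell $a$ of tape 1 and cell $b$ of tape 2. Commands are $q_i\varepsilon\sigma\to q_jT_\alpha T_\beta$ with $1\le i\le n$, $0\le j\le n$, $\varepsilon,\sigma\in\{0,1\}$, $\alpha,\beta\in\{-1,0,1\}$, $\alpha\ge0$ if $\varepsilon=1$, $\beta\ge0$ if $\sigma=1$, at most one per triple $(i,\varepsilon,\sigma)$; such a command applies to $[i,a,b]$ when ($\varepsilon=1$ iff $a=0$) and ($\sigma=1$ iff $b=0$), producing $[j,a+\alpha,b+\beta]$. Acyclic means no configuration recurs after a positive number of steps. $A=\Phi\{x_1,x_2,q_0,\ldots,q_n\}$ is the differential polynomial ring w.r.t. $\delta_1,\delta_2$ (polynomial ring in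 independent variables $\delta_1^a\delta_2^b(y)$, $y\in\{x_1,x_2,q_0,\ldots,q_n\}$, $\delta_1,\delta_2$ raising the corresponding exponent). $J$ is the differential ideal generated by $\delta_1(x_2),\delta_2(x_1)$, and $B=A/J$ with induced derivations. For each command of $M$, $g(i,\varepsilon,\sigma)$ is the image in $B$ of $x_1^{\varepsilon}x_2^{\sigma}\delta_1^{1-\varepsilon}\delta_2^{1-\sigma}(q_i)-x_1^{\varepsilon}x_2^{\sigma}\delta_1^{1-\varepsilon+\alpha}\delta_2^{1-\sigma+\beta}(q_j)$; $g_m$ is the image of $x_1x_2\delta_1^{2^{2^m}}(q_1)-x_1x_2\delta_1(q_0)$. $B^e$ is the ring which is the free left $B$-module on the basis $\{\delta_1^i\delta_2^j: i,j\ge0\}$ with $\delta_l$ commuting and $\delta_l b=b\delta_l+\delta_l(b)$; $B$ is a left $B^e$-module ($b$ acting by multiplication, $\delta_l$ as derivations). $W_{\varepsilon\sigma}$ is the set of elements $x_1^{1-\varepsilon}x_2^{1-\sigma}\delta_1^i\delta_2^j\in B^e$ with $i,j\ge0$, $i=0$ if $\varepsilon=1$, $j=0$ if $\sigma=1$ (so $W_{11}=\{1\}$). *)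

From HB Require Import structures.
From mathcomp Require Import all_boot all_order all_algebra.
From mathcomp Require Import finmap.
From mathcomp.multinomials Require Import monalg.

Set Implicit Arguments.
Unset Strict Implicit.
Unset Printing Implicit Defensive.

Import Order.TTheory GRing.Theory Num.Theory.
Local Open Scope ring_scope.

(* Two-tape Minsky machines with states q_0, ..., q_n (q_0 terminal). *)
(* A command  q_i eps sigma -> q_j T_alpha T_beta  is encoded by       *)
(* cmd i eps sigma = Some (j, alpha, beta); at most one command per   *)
(* triple is built in since cmd is a function.                       *)

Definition minsky_cmds (n : nat) :=
  'I_n.+1 -> bool -> bool -> option ('I_n.+1 * int * int).

Definition wf_cmds (n : nat) (cmd : minsky_cmds n) : Prop :=
  forall (i : 'I_n.+1) (e s : bool) (j : 'I_n.+1) (al be : int),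
    cmd i e s = Some (j, al, be) ->
    [/\ (0 < val i)%N,
        (-1 <= al <= 1), (-1 <= be <= 1),
        (e -> 0 <= al) & (s -> 0 <= be)].

(* configuration [i, a, b] : state q_i, head positions a, b *)
Definition config (n : nat) := ('I_n.+1 * nat * nat)%type.

Definition mstep (n : nat) (cmd : minsky_cmds n) (c : config n)
  : option (config n) :=
  let: (i, a, b) := c in
  match cmd i (a == 0)%N (b == 0)%N with
  | Some (j, al, be) => Some (j, absz (a%:Z + al), absz (b%:Z + be))
  | None => None
  end.

Fixpoint mrun (n : nat) (cmd : minsky_cmds n) (k : nat) (c : config n)
  : option (config n) :=
  match k with
  | 0%N => Some c
  | k'.+1 => match mstep cmd c with
             | Some c' => mrun cmd k' c'
             | None => None
             end
  end.

Definition acyclic (n : nat) (cmd : minsky_cmds n) : Prop :=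
  forall (c : config n) (k : nat), (0 < k)%N -> mrun cmd k c <> Some c.

(* The differential polynomial ring A = Phi{x1, x2, q_0, ..., q_n}:   *)
(* the polynomial ring in the independent variables                   *)
(* delta1^a delta2^b (y), encoded as (y, a, b), where y is            *)
(* inl false = x1, inl true = x2, inr i = q_i.                         *)

Definition dvar (n : nat) := ((bool + 'I_n.+1) * nat * nat)%type.

Definition dpoly (Phi : comNzRingType) (n : nat) :=
  {malg Phi[{cmonom (dvar n)}]}.

Section DiffPoly.
Variables (Phi : comNzRingType) (n : nat).
Local Notation A := (dpoly Phi n).

Definition dX (v : dvar n) : A := << ucm v >>.

Definition shift1 (v : dvar n) : dvar n := (v.1.1, v.1.2.+1, v.2).
Definition shift2 (v : dvar n) : dvar n := (v.1.1, v.1.2, v.2.+1).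

(* the unique Phi-linear derivation of A sending the variable v to
   the variable sh v (Leibniz rule on monomials) *)
Definition dder (sh : dvar n -> dvar n) (p : A) : A :=
  \sum_(m <- msupp p)
     p@_m *: \sum_(v <- finsupp m)
               ((m v)%:R * << divcm m (ucm v) >> * dX (sh v)).

Definition delta1 : A -> A := dder shift1.
Definition delta2 : A -> A := dder shift2.

Definition vx1 : A := dX (inl false, 0%N, 0%N).
Definition vx2 : A := dX (inl true, 0%N, 0%N).
Definition vq (i : 'I_n.+1) : A := dX (inr i, 0%N, 0%N).

Definition is_diff_ideal (I : A -> Prop) : Prop :=
  [/\ I 0,
      (forall a b, I a -> I b -> I (a + b)),
      (forall r a, I a -> I (r * a)),
      (forall a, I a -> I (delta1 a)) &
      (forall a, I a -> I (delta2 a))].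

Definition inJ (p : A) : Prop :=
  forall I : A -> Prop, is_diff_ideal I ->
    I (delta1 vx2) -> I (delta2 vx1) -> I p.

(* equality in B = A / J of the images of p and q *)
Definition eqB (p q : A) : Prop := inJ (p - q).

(* (a representative in A of) g(i, eps, sigma) for the command
   q_i eps sigma -> q_j T_al T_be *)
Definition gcmd (i : 'I_n.+1) (e s : bool) (j : 'I_n.+1) (al be : int) : A :=
  vx1 ^+ e * vx2 ^+ s * iter (~~ e) delta1 (iter (~~ s) delta2 (vq i))
  - vx1 ^+ e * vx2 ^+ s
      * iter (absz ((~~ e)%:Z + al)) delta1 (iter (absz ((~~ s)%:Z + be)) delta2 (vq j)).

(* (a representative in A of) g_m ; q_1 is (inord 1) *)
Definition gm (m : nat) : A :=
  vx1 * vx2 * iter (2 ^ (2 ^ m))%N delta1 (vq (inord 1))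
  - vx1 * vx2 * delta1 (vq ord0).

(* action of w = x1^(1-eps) x2^(1-sigma) delta1^a delta2^b in B^e on p *)
Definition wact (e s : bool) (a b : nat) (p : A) : A :=
  vx1 ^+ (~~ e) * vx2 ^+ (~~ s) * iter a delta1 (iter b delta2 p).

(* w = x1^(1-eps) x2^(1-sigma) delta1^a delta2^b lies in W_{eps sigma} *)
Definition inW (e s : bool) (a b : nat) : Prop :=
  (e -> a = 0%N) /\ (s -> b = 0%N).

End DiffPoly.

(* one term  c * w * g(i, eps, sigma)  of a Phi-linear combination:
   (c, (i, eps, sigma), (j, al, be), (a, b)) *)
Definition lc_term (Phi : comNzRingType) (n : nat) :=
  (Phi * ('I_n.+1 * bool * bool) * ('I_n.+1 * int * int) * (nat * nat))%type.

Definition lc_valid (Phi : comNzRingType) (n : nat) (cmd : minsky_cmds n)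
  (t : lc_term Phi n) : Prop :=
  let: (c, (i, e, s), (j, al, be), (a, b)) := t in
  cmd i e s = Some (j, al, be) /\ inW e s a b.

Definition lc_val (Phi : comNzRingType) (n : nat) (t : lc_term Phi n)
  : dpoly Phi n :=
  let: (c, (i, e, s), (j, al, be), (a, b)) := t in
  c *: wact e s a b (gcmd Phi i e s j al be).

From HB Require Import structures.
From mathcomp Require Import all_boot all_order all_algebra.
From mathcomp Require Import finmap.
From mathcomp.multinomials Require Import monalg.
From Stdlib Require Import ClassicalEpsilon.
From mathcomp Require Import zify.

(* Polynomials all of whose monomials contain a "cross" variable
   delta2^b x1 or delta1^a x2 (with a, b > 0) form a differential ideal
   containing J. Modulo it, w g(i, eps, sigma) becomes
   x1 x2 q_c - x1 x2 q_c', where the configuration c is sent to c' by the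
   command of q_i eps sigma, with q_c := delta1^a delta2^b q_i for c = [i, a, b].
   The linear functional sending x1 x2 q_c to 1 if c reaches [0, 1, 0] and
   every other monomial to 0 therefore vanishes on the right-hand side, while
   on g_m it equals (1 if [1, 2^(2^m), 0] reaches [0, 1, 0] else 0) - 1.
   As 1 <> 0 in Phi, M reaches [0, 1, 0], hence halts, from [1, 2^(2^m), 0],
   which forces m in S. *)

Set Implicit Arguments.
Unset Strict Implicit.
Unset Printing Implicit Defensive.

Import GRing.Theory.
Local Open Scope ring_scope.

Section DiffPolyCalculus.
Variables (Phi : comNzRingType) (n : nat).
Local Notation A := (dpoly Phi n).
Local Notation K := (cmonom (dvar n)).
Local Notation X := (dX Phi).
Local Notation dder := (@dder Phi n).

Definition dder_monom (sh : dvar n -> dvar n) (m : K) : A :=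
  \sum_(v <- finsupp m) ((m v)%:R * << divcm m (ucm v) >> * X (sh v)).

Lemma dderE sh (p : A) : dder sh p = mmap malgC (dder_monom sh) p.
Proof. by apply: eq_bigr => m _; rewrite mul_malgC. Qed.

Lemma dderB sh : {morph dder sh : p q / p - q}.
Proof. by move=> p q; rewrite !dderE mmapB. Qed.

Lemma iter_dderB sh k : {morph iter k (dder sh) : p q / p - q}.
Proof. by move=> p q; elim: k => //= k ->; rewrite dderB. Qed.

Lemma dder_monomial sh (m : K) : dder sh << m >> = dder_monom sh m.
Proof. by rewrite dderE mmapU mul1r. Qed.

Lemma malgUM (m1 m2 : K) : << m1 >> * << m2 >> = << mmul m1 m2 >> :> A.
Proof. by rewrite malgM_def fgmulUU mulr1. Qed.

Lemma dder_dX sh v : dder sh (X v) = X (sh v).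
Proof.
rewrite dder_monomial /dder_monom mdomU big_seq_fset1 cmUU mul1r.
have -> : divcm (ucm v) (ucm v) = mone :> K.
  by apply/eqP/cmP => u; rewrite divcmE subnn cm1.
by rewrite -/(1 : A) mul1r.
Qed.

Lemma iter_dder_dX sh k v : iter k (dder sh) (X v) = X (iter k sh v).
Proof.
elim: k => [|k IH]; first by [].
rewrite [iter k.+1 _ _]iterS [iter k.+1 sh v]iterS [iter k _ _]IH.
exact: dder_dX.
Qed.

Lemma dder_dXM sh u w : u != w ->
  dder sh (X u * X w) = X (sh u) * X w + X u * X (sh w).
Proof.
move=> neq_uw.
have uwE : mmul (ucm u) (ucm w) u = 1%N by rewrite cmM !cmU eqxx eq_sym (negbTE neq_uw).
have wuE : mmul (ucm u) (ucm w) w = 1%N by rewrite cmM !cmU eqxx (negbTE neq_uw).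
have divuE : divcm (mmul (ucm u) (ucm w)) (ucm u) = ucm w.
  by apply/eqP/cmP => v; rewrite divcmE cmM addKn.
have divwE : divcm (mmul (ucm u) (ucm w)) (ucm w) = ucm u.
  by apply/eqP/cmP => v; rewrite divcmE cmM addnK.
rewrite [p in dder _ p]malgUM dder_monomial /dder_monom mdomD !mdomU.
rewrite big_fsetU1 ?inE // big_seq_fset1 uwE wuE divuE divwE.
(* Ring rewrites on concrete polynomials make Rocq compute with their
   supports, so the remaining identity is proved for abstract ones. *)
have reorder (p q p' q' : A) : 1%:R * p * p' + 1%:R * q * q' = p' * p + q * q'.
  by rewrite !mulr1n !mul1r [p' * p]mulrC.
exact: reorder.
Qed.

Lemma iter_shift1 k (y : bool + 'I_n.+1) a b :
  iter k (@shift1 n) (y, a, b) = (y, a + k, b)%N.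
Proof. by elim: k => [|k IH]; rewrite ?addn0 //= IH /shift1 addnS. Qed.

Lemma iter_shift2 k (y : bool + 'I_n.+1) a b :
  iter k (@shift2 n) (y, a, b) = (y, a, b + k)%N.
Proof. by elim: k => [|k IH]; rewrite ?addn0 //= IH /shift2 addnS. Qed.

Lemma iter_delta12_dX a b (y : bool + 'I_n.+1) a0 b0 :
  iter a (@delta1 Phi n) (iter b (@delta2 Phi n) (X (y, a0, b0)))
  = X (y, a0 + a, b0 + b)%N.
Proof. by rewrite !iter_dder_dX iter_shift2 iter_shift1. Qed.

Definition cross_var (v : dvar n) : bool :=
  match v with
  | (inl false, _, b) => (0 < b)%N
  | (inl true, a, _) => (0 < a)%N
  | (inr _, _, _) => false
  end.

Definition cross_monom (m : K) : Prop := exists2 v, cross_var v & (0 < m v)%N.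

Definition cross_supp (p : A) : Prop := forall m, ~ cross_monom m -> p@_m = 0.

Lemma cross_monomMr (m1 m2 : K) : cross_monom m2 -> cross_monom (mmul m1 m2).
Proof. by case=> v cv m2v; exists v; rewrite // cmM addn_gt0 m2v orbT. Qed.

Lemma cross_supp0 : cross_supp 0.
Proof. by move=> m _; rewrite mcoeff0. Qed.

Lemma cross_suppD p q : cross_supp p -> cross_supp q -> cross_supp (p + q).
Proof. by move=> cp cq m cm; rewrite mcoeffD cp // cq // addr0. Qed.

Lemma cross_suppN p : cross_supp p -> cross_supp (- p).
Proof. by move=> cp m cm; rewrite mcoeffN cp // oppr0. Qed.

Lemma cross_suppZ c p : cross_supp p -> cross_supp (c *: p).
Proof. by move=> cp m cm; rewrite mcoeffZ cp // mulr0. Qed.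

Lemma cross_suppMl r p : cross_supp p -> cross_supp (r * p).
Proof.
move=> cp m cm; rewrite mcoeffMl big1 // => m1 _; rewrite big1 // => m2 _.
case: eqP => [mE|]; last by rewrite mulr0n.
case: (classic (cross_monom m2)) => [cm2|ncm2]; last by rewrite cp // mulr0 mul0rn.
by case: cm; rewrite -mE; apply: cross_monomMr.
Qed.

Lemma cross_supp_monomial (m : K) : cross_monom m -> cross_supp << m >>.
Proof.
move=> cm m' ncm'; rewrite mcoeffU1.
by case: eqP => // mE; case: ncm'; rewrite -mE.
Qed.

Lemma cross_supp_sum (I : Type) (r : seq I) (F : I -> A) :
  (forall i, cross_supp (F i)) -> cross_supp (\sum_(i <- r) F i).
Proof.
by move=> cF; elim/big_rec: _ => [|i p _]; [apply: cross_supp0 | apply: cross_suppD].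
Qed.

Lemma cross_supp_dder sh : {homo sh : v / cross_var v} ->
  forall p, cross_supp p -> cross_supp (dder sh p).
Proof.
move=> sh_cross p cp; apply: cross_supp_sum => m.
case: (classic (cross_monom m)) => [[u cu mu]|ncm]; last first.
  by rewrite cp // scale0r; apply: cross_supp0.
apply/cross_suppZ/cross_supp_sum => v.
rewrite -mulrA; apply: cross_suppMl; rewrite /dX malgUM; apply: cross_supp_monomial.
have [<-|neq_uv] := eqVneq u v.
  by exists (sh u); rewrite ?sh_cross // cmM cmUU addn1.
by exists u; rewrite // cmM divcmE cmU eq_sym (negbTE neq_uv) subn0 addn_gt0 mu.
Qed.

Lemma shift1_cross : {homo @shift1 n : v / cross_var v}.
Proof. by case=> [[[[]|i] a] b]. Qed.

Lemma shift2_cross : {homo @shift2 n : v / cross_var v}.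
Proof. by case=> [[[[]|i] a] b]. Qed.

Lemma cross_supp_diff_ideal : is_diff_ideal cross_supp.
Proof.
split; [exact: cross_supp0 | exact: cross_suppD | exact: cross_suppMl | |].
- exact: cross_supp_dder shift1_cross.
- exact: cross_supp_dder shift2_cross.
Qed.

Lemma inJ_cross_supp p : inJ p -> cross_supp p.
Proof.
move=> Jp; apply: Jp cross_supp_diff_ideal _ _.
- rewrite /delta1 /vx2 dder_dX; apply: cross_supp_monomial.
  by exists (shift1 (inl true, 0, 0)%N); rewrite ?cmUU.
- rewrite /delta2 /vx1 dder_dX; apply: cross_supp_monomial.
  by exists (shift2 (inl false, 0, 0)%N); rewrite ?cmUU.
Qed.

Definition cross_eq (p q : A) : Prop := cross_supp (p - q).

Lemma cross_eq_eq p q : p = q -> cross_eq p q.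
Proof. by move->; rewrite /cross_eq subrr; apply: cross_supp0. Qed.

Lemma cross_eq_trans p q r : cross_eq p q -> cross_eq q r -> cross_eq p r.
Proof. by move=> pq qr; have := cross_suppD pq qr; rewrite addrA subrK. Qed.

Lemma cross_eqMl r p q : cross_eq p q -> cross_eq (r * p) (r * q).
Proof. by rewrite /cross_eq -mulrBr; apply: cross_suppMl. Qed.

Lemma cross_eqZ c p q : cross_eq p q -> cross_eq (c *: p) (c *: q).
Proof. by rewrite /cross_eq -scalerBr; apply: cross_suppZ. Qed.

Lemma cross_eqB p1 q1 p2 q2 :
  cross_eq p1 q1 -> cross_eq p2 q2 -> cross_eq (p1 - p2) (q1 - q2).
Proof.
move=> e1 e2; have := cross_suppD e1 (cross_suppN e2).
by rewrite /cross_eq !opprD addrACA.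
Qed.

Lemma cross_eq_addl a p : cross_supp a -> cross_eq (a + p) p.
Proof. by rewrite /cross_eq addrK. Qed.

Lemma cross_eq_dder sh p q : {homo sh : v / cross_var v} ->
  cross_eq p q -> cross_eq (dder sh p) (dder sh q).
Proof. by move=> sh_cross; rewrite /cross_eq -dderB; apply: cross_supp_dder. Qed.

(* Modulo cross terms a variable [u] whose derivative is a cross variable
   behaves as a constant. *)
Lemma iter_dder_dXM_cross_eq sh u w k :
  {homo sh : v / cross_var v} -> (forall v, (sh v).1.1 = v.1.1) ->
  cross_var (sh u) -> u.1.1 != w.1.1 ->
  cross_eq (iter k (dder sh) (X u * X w)) (X u * X (iter k sh w)).
Proof.
move=> sh_cross sh_fst cross_shu neq_uw.
elim: k => [|k IH]; first exact: cross_eq_eq.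
rewrite [iter k.+1 _ _]iterS [iter k.+1 sh w]iterS.
apply: cross_eq_trans (cross_eq_dder sh_cross IH) _.
have fstE : (iter k sh w).1.1 = w.1.1.
  by elim: (k) => [|k' IHk]; rewrite ?iterS ?sh_fst.
have neq_u : u != iter k sh w by apply: contraNneq neq_uw => ->; rewrite fstE.
rewrite [dder _ _](dder_dXM sh neq_u); apply: cross_eq_addl.
rewrite /dX malgUM; apply: cross_supp_monomial.
by exists (sh u); rewrite // cmM cmUU.
Qed.

Lemma wact_cross_eq e s a b (i : 'I_n.+1) a0 b0 : inW e s a b ->
  cross_eq (wact e s a b (vx1 Phi n ^+ e * vx2 Phi n ^+ s * X (inr i, a0, b0)))
           (vx1 Phi n * vx2 Phi n * X (inr i, a0 + a, b0 + b)%N).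
Proof.
move=> [ea sb]; rewrite /wact.
case: e ea => ea; case: s sb => sb.
- rewrite (ea erefl) (sb erefl) !addn0; apply: cross_eq_eq.
  move: (vx1 Phi n) (vx2 Phi n) (X _) => x y z.
  by rewrite !expr0 !expr1 !mul1r.
- rewrite (ea erefl) addn0.
  have : cross_eq (iter b (@delta2 Phi n) (vx1 Phi n * X (inr i, a0, b0)))
                  (vx1 Phi n * X (inr i, a0, b0 + b)%N).
    rewrite -[in X (_, _, b0 + b)]iter_shift2.
    by apply: iter_dder_dXM_cross_eq shift2_cross _ _ _.
  move/(cross_eqMl (vx2 Phi n)); move: (vx1 Phi n) (vx2 Phi n) (X _) (X _) => x y z z'.
  by rewrite expr0 !expr1 expr0 mul1r mulr1 [x * y]mulrC -mulrA.
- rewrite (sb erefl) addn0.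
  have : cross_eq (iter a (@delta1 Phi n) (vx2 Phi n * X (inr i, a0, b0)))
                  (vx2 Phi n * X (inr i, a0 + a, b0)%N).
    rewrite -[in X (_, a0 + a, _)]iter_shift1.
    by apply: iter_dder_dXM_cross_eq shift1_cross _ _ _.
  move/(cross_eqMl (vx1 Phi n)); move: (vx1 Phi n) (vx2 Phi n) (X _) (X _) => x y z z'.
  by rewrite !expr1 !expr0 mul1r mulr1 -mulrA.
- rewrite -iter_delta12_dX; apply: cross_eq_eq.
  move: (vx1 Phi n) (vx2 Phi n) (X _) => x y z.
  by rewrite !expr0 !expr1 !mul1r.
Qed.

Lemma wactB e s a b : {morph @wact Phi n e s a b : p q / p - q}.
Proof.
by move=> p q; rewrite /wact [iter b _ _]iter_dderB [iter a _ _]iter_dderB mulrBr.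
Qed.

Definition config_poly (c : config n) : A :=
  vx1 Phi n * vx2 Phi n * X (inr c.1.1, c.1.2, c.2).

Lemma lc_val_cross_eq c i e s j al be a b : inW e s a b ->
  cross_eq (lc_val (c, (i, e, s), (j, al, be), (a, b)))
    (c *: (config_poly (i, (~~ e + a)%N, (~~ s + b)%N)
           - config_poly (j, (absz ((~~ e)%:Z + al)%R + a)%N,
                             (absz ((~~ s)%:Z + be)%R + b)%N))).
Proof.
move=> eswab; rewrite /lc_val /gcmd wactB; apply/cross_eqZ/cross_eqB;
  by rewrite /vq iter_delta12_dX !add0n; apply: wact_cross_eq.
Qed.

End DiffPolyCalculus.

Lemma absz_addn_shift (x a : nat) (al : int) :
  0 <= x%:Z + al -> absz ((x + a)%:Z + al) = (absz (x%:Z + al)%R + a)%N.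
Proof. by lia. Qed.

Section Reachability.
Variables (n : nat) (cmd : minsky_cmds n).
Hypothesis cmd_wf : wf_cmds cmd.

Definition reaches_end (c : config n) : Prop :=
  exists k, mrun cmd k c = Some (ord0, 1%N, 0%N).

Lemma mrunS k c : mrun cmd k.+1 c = obind (mstep cmd) (mrun cmd k c).
Proof.
elim: k c => [|k IH] c /=; first by case: (mstep cmd c).
by case: (mstep cmd c) => // c'; rewrite -IH.
Qed.

Lemma mstep_ord0 a b : mstep cmd (ord0, a, b) = None.
Proof.
rewrite /mstep; case cmdE: (cmd _ _ _) => [[[j al] be]|] //.
by have [] := cmd_wf cmdE.
Qed.

Lemma reaches_end_halts c : reaches_end c -> exists k, mrun cmd k c = None.
Proof. by case=> k runE; exists k.+1; rewrite mrunS runE; apply: mstep_ord0. Qed.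

Lemma reaches_end_step c c' : mstep cmd c = Some c' ->
  reaches_end c <-> reaches_end c'.
Proof.
move=> stepE; split=> [[[|k] runE]|[k runE]]; last by exists k.+1; rewrite /= stepE.
- by move: stepE; case: runE => ->; rewrite mstep_ord0.
- by exists k; move: runE; rewrite /= stepE.
Qed.

Lemma mstep_cmd i e s j al be a b : cmd i e s = Some (j, al, be) -> inW e s a b ->
  mstep cmd (i, (~~ e + a)%N, (~~ s + b)%N)
  = Some (j, (absz ((~~ e)%:Z + al)%R + a)%N, (absz ((~~ s)%:Z + be)%R + b)%N).
Proof.
move=> cmdE [ea sb]; have [_ al_bd be_bd al_ge0 be_ge0] := cmd_wf cmdE.
have eE : (~~ e + a == 0)%N = e by case: (e) ea => [->|].
have sE : (~~ s + b == 0)%N = s by case: (s) sb => [->|].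
rewrite /mstep eE sE cmdE !absz_addn_shift //.
- by case: (s) be_ge0 => [/(_ isT)|_] /=; lia.
- by case: (e) al_ge0 => [/(_ isT)|_] /=; lia.
Qed.

End Reachability.

Section EndFunctional.
Variables (Phi : comNzRingType) (n : nat) (cmd : minsky_cmds n).
Local Notation A := (dpoly Phi n).
Local Notation K := (cmonom (dvar n)).

Definition config_monom (c : config n) : K :=
  mmul (mmul (ucm (inl false, 0, 0)%N) (ucm (inl true, 0, 0)%N))
       (ucm (inr c.1.1, c.1.2, c.2)).

Lemma config_polyE c : config_poly Phi c = << config_monom c >>.
Proof. by rewrite /config_poly /vx1 /vx2 /dX !malgUM. Qed.

Lemma config_monom_inj : injective config_monom.
Proof.
move=> [[i a] b] [[i' a'] b'] /(congr1 (fun m : K => m (inr i, a, b))).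
by rewrite !cmM !cmU eqxx /=; case: eqP => // -[-> -> ->].
Qed.

Lemma config_monom_cross c : ~ cross_monom (config_monom c).
Proof.
case=> u + ; rewrite !cmM !cmU.
by case: eqP => [<-//|_]; case: eqP => [<-//|_]; case: eqP => [<-//|_].
Qed.

Definition reach_weight (c : config n) : Phi :=
  if excluded_middle_informative (reaches_end cmd c) then 1 else 0.

Definition end_weight (m : K) : Phi :=
  if excluded_middle_informative (exists2 c, m = config_monom c & reaches_end cmd c)
  then 1 else 0.

Definition end_functional (p : A) : Phi := mmap idfun end_weight p.

Lemma end_functionalB : {morph end_functional : p q / p - q}.
Proof. exact: mmapB. Qed.

Lemma end_functional_sum (I : Type) (r : seq I) (F : I -> A) :
  end_functional (\sum_(i <- r) F i) = \sum_(i <- r) end_functional (F i).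
Proof. exact: raddf_sum. Qed.

Lemma reach_weight_reach c : reaches_end cmd c -> reach_weight c = 1.
Proof. by rewrite /reach_weight; case: excluded_middle_informative. Qed.

Lemma reach_weight_unreach c : ~ reaches_end cmd c -> reach_weight c = 0.
Proof. by rewrite /reach_weight; case: excluded_middle_informative. Qed.

Lemma end_weight_cross m : cross_monom m -> end_weight m = 0.
Proof.
move=> cm; rewrite /end_weight; case: excluded_middle_informative => /= [[c mE _]|//].
by move: cm; rewrite mE => /config_monom_cross.
Qed.

Lemma end_weight_config c : end_weight (config_monom c) = reach_weight c.
Proof.
rewrite /end_weight /reach_weight.
case: (excluded_middle_informative (reaches_end cmd c)) => /= [reach_c|nreach_c].
- by case: excluded_middle_informative => //= -[]; exists c.
- by case: excluded_middle_informative => //= -[c' /config_monom_inj <- /nreach_c].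
Qed.

Lemma end_functional_cross_supp p : cross_supp p -> end_functional p = 0.
Proof.
move=> cp; rewrite /end_functional mmapE big1 // => m _.
case: (classic (cross_monom m)) => [cm|ncm].
  by rewrite end_weight_cross // mulr0.
by rewrite cp // mul0r.
Qed.

Lemma end_functional_cross_eq p q :
  cross_eq p q -> end_functional p = end_functional q.
Proof.
move=> /end_functional_cross_supp; rewrite end_functionalB.
by move/eqP; rewrite subr_eq0 => /eqP.
Qed.

Lemma end_functionalZ c p : end_functional (c *: p) = c * end_functional p.
Proof.
rewrite /end_functional (mmapEw (msuppZ_le _ _)) mmapE mulr_sumr.
by apply: eq_bigr => m _; rewrite mcoeffZ mulrA.
Qed.

Lemma end_functional_config c : end_functional (config_poly Phi c) = reach_weight c.
Proof. by rewrite config_polyE /end_functional mmapU mul1r end_weight_config. Qed.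

Hypothesis cmd_wf : wf_cmds cmd.

Lemma reach_weight_step c c' : mstep cmd c = Some c' ->
  reach_weight c = reach_weight c'.
Proof.
move=> /(reaches_end_step cmd_wf) reachE; rewrite /reach_weight.
case: excluded_middle_informative => /= [reach_c|nreach_c];
  case: excluded_middle_informative => //= reach_c'.
- by case: reach_c'; apply/reachE.
- by case: nreach_c; apply/reachE.
Qed.

Lemma end_functional_lc_val t : lc_valid cmd t -> end_functional (lc_val t) = 0.
Proof.
case: t => [[[c [[i e] s]] [[j al] be]] [a b]] [cmdE eswab].
rewrite (end_functional_cross_eq (lc_val_cross_eq c i j al be eswab)).
rewrite end_functionalZ end_functionalB.
rewrite [X in c * (X - _)]end_functional_config [X in c * (_ - X)]end_functional_config.
by rewrite (reach_weight_step (mstep_cmd cmd_wf cmdE eswab)) subrr mulr0.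
Qed.

End EndFunctional.

Theorem lemma5 (Phi : comNzRingType) (n : nat) (S : nat -> Prop)
  (cmd : minsky_cmds n)
  (hn : (0 < n)%N)
  (Hwf : wf_cmds cmd)
  (Hacyc : acyclic cmd)
  (HM : forall x : nat,
     (S x -> exists k, mrun cmd k (inord 1, (2 ^ (2 ^ x))%N, 0%N)
                       = Some (ord0, 1%N, 0%N)) /\
     (~ S x -> forall k, mrun cmd k (inord 1, (2 ^ (2 ^ x))%N, 0%N) <> None))
  (m : nat) (L : seq (lc_term Phi n))
  (HL : forall t, t \in L -> lc_valid cmd t)
  (Hcomb : eqB (gm Phi n m) (\sum_(t <- L) lc_val t)) :
  S m.
Proof.
case: (classic (S m)) => // nSm; have [_ /(_ nSm) runs_forever] := HM m.
set start : config n := (inord 1, (2 ^ (2 ^ m))%N, 0%N).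
have [reach_start|nreach_start] := classic (reaches_end cmd start).
  by have [k /runs_forever] := reaches_end_halts Hwf reach_start.
have reach_end : reaches_end cmd (ord0, 1%N, 0%N) by exists 0%N.
have gmE : gm Phi n m = config_poly Phi start - config_poly Phi (ord0, 1%N, 0%N).
  by rewrite /gm /vq iter_dder_dX iter_shift1 /delta1 dder_dX.
have F_gm : end_functional cmd (gm Phi n m) = 0.
  rewrite (end_functional_cross_eq cmd (inJ_cross_supp Hcomb)) end_functional_sum.
  by rewrite big_seq; apply: big1 => t /HL; apply: end_functional_lc_val.
move: F_gm; rewrite gmE end_functionalB.
rewrite [X in X - _]end_functional_config [X in _ - X]end_functional_config.
rewrite [X in X - _](reach_weight_unreach Phi nreach_start).
rewrite [X in _ - X](reach_weight_reach Phi reach_end) sub0r => /eqP.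
by rewrite oppr_eq0 oner_eq0.
Qed.
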